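(* Let $(\mathcal{X},\mathcal{B})$ be a $2$-IPPS$(4,v)$ such that (i) $|B_1\cap B_2|\le 2$ for all distinct $B_1,B_2\in\mathcal{B}$, and (ii) for every $B\in\mathcal{B}$ and every $x\in B$ there exists $B'\in\mathcal{B}\setminus\{B\}$ with $x\in B'$. Then $$\big|\{B\in\mathcal{B}:\ \exists\,B'\in\mathcal{B}\setminus\{B\}\text{ with }|B\cap B'|=2\}\big|\le v-1.$$
   Context: A $(w,v)$ set system is a pair $(\mathcal{X},\mathcal{B})$ with $|\mathcal{X}|=v$ and $\mathcal{B}$ a family of $w$-element subsets (blocks) of $\mathcal{X}$. For a $w$-subset $T\subseteq\mathcal{X}$ let $P_t(T)=\{\mathcal{P}\subseteq\mathcal{B}: |\mathcal{P}|\le t,\ T\subseteq\bigcup_{B\in\mathcal{P}}B\}$. The set system is a $t$-IPPS$(w,v)$ if for every $w$-subset $T\subseteq\mathcal{X}$, either $P_t(T)=\emptyset$ or $\bigcap_{\mathcal{P}\in P_t(T)}\mathcal{P}\neq\emptyset$. *)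

From mathcomp Require Import all_boot.
Set Implicit Arguments. Unset Strict Implicit. Unset Printing Implicit Defensive.

(* A (w,v) set system: point set X (a finType, v = #|X|) and a family of
   blocks Bs : {set {set X}}, each block of size w. *)
Definition set_system (X : finType) (w : nat) (Bs : {set {set X}}) : Prop :=
  forall B, B \in Bs -> #|B| = w.

Definition Pt (X : finType) (t : nat) (Bs : {set {set X}}) (T : {set X})
  : {set {set {set X}}} :=
  [set P in powerset Bs | (#|P| <= t) && (T \subset \bigcup_(B in P) B)].

Definition IPPS (X : finType) (t w : nat) (Bs : {set {set X}}) : Prop :=
  set_system w Bs /\
  forall T : {set X}, #|T| = w ->
    Pt t Bs T = set0 \/ exists B, forall P, P \in Pt t Bs T -> B \in P.

From mathcomp Require Import all_boot zify.
Set Implicit Arguments. Unset Strict Implicit. Unset Printing Implicit Defensive.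

(* A block B meeting another block B' in exactly two points owns the two
   points of B :\: B'.  These private pairs are pairwise disjoint, so there are
   at most v/2 such blocks.  If y were private
   to both B (against B') and C (against C'), then either C :&: C' = B :&: B'
   and B :&: C has three points, or some c \in C :&: C' lies outside B :&: B'
   and the 4-set {y, c} :|: B :&: B' is covered by the pairs {B, C'}, {B', C}
   and {B, C}, which have no block in common. *)

Lemma card_disjoint_family (T I : finType) (J : {set I}) (F : I -> {set T}) n :
  0 < n -> {in J, forall i, #|F i| = n} ->
  {in J &, forall i j, j != i -> [disjoint F i & F j]} ->
  #|J| * n <= #|T|.
Proof.
move=> n_gt0 cardF disjF.
have F_neq0 : set0 \notin F @: J.
  apply/imsetP=> -[i Ji F0]; have := cardF i Ji.
  by rewrite -F0 cards0 => n0; rewrite -n0 in n_gt0.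
have [tiF injF] := trivIimset disjF F_neq0.
rewrite -(card_in_imset injF) -sum_nat_const.
rewrite (eq_bigr (fun A : {set T} => #|A|)); last first.
  by move=> _ /imsetP[i Ji ->]; rewrite cardF.
by rewrite (eqnP tiF) max_card.
Qed.

Lemma pair_in_Pt (X : finType) t (Bs : {set {set X}}) (T : {set X}) B1 B2 :
  1 < t -> B1 \in Bs -> B2 \in Bs -> T \subset B1 :|: B2 ->
  [set B1; B2] \in Pt t Bs T.
Proof.
move=> t_gt1 B1s B2s sT; rewrite inE powersetE.
apply/and3P; split.
- by apply/subsetP=> B; rewrite !inE => /orP[] /eqP->.
- by rewrite cards2; apply: leq_ltn_trans (leq_b1 _) t_gt1.
- apply: (subset_trans sT); rewrite subUset.
  by apply/andP; split; apply: bigcup_sup; rewrite !inE eqxx ?orbT.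
Qed.

Lemma IPPS2_common_block (X : finType) w (Bs : {set {set X}}) (T : {set X}) B1 B2 :
  IPPS 2 w Bs -> #|T| = w -> B1 \in Bs -> B2 \in Bs -> T \subset B1 :|: B2 ->
  exists W, forall C1 C2, C1 \in Bs -> C2 \in Bs -> T \subset C1 :|: C2 ->
    W = C1 \/ W = C2.
Proof.
move=> [_ /(_ T) ipps] cardT B1s B2s sT.
have [PT0 | [W inW]] := ipps cardT.
  by have := pair_in_Pt (ltnSn 1) B1s B2s sT; rewrite PT0 inE.
exists W => C1 C2 C1s C2s sTC.
by have := inW _ (pair_in_Pt (ltnSn 1) C1s C2s sTC); rewrite !inE => /orP[] /eqP; auto.
Qed.

Section PrivateParts.

Variables (X : finType) (Bs : {set {set X}}).
Hypothesis ipps : IPPS 2 4 Bs.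
Hypothesis meet_le2 :
  forall B1 B2, B1 \in Bs -> B2 \in Bs -> B1 != B2 -> #|B1 :&: B2| <= 2.

Lemma disjoint_private_parts B B' C C' :
  B \in Bs -> B' \in Bs -> C \in Bs -> C' \in Bs ->
  B != C -> B' != B -> C' != C -> #|B :&: B'| = 2 -> #|C :&: C'| = 2 ->
  [disjoint B :\: B' & C :\: C'].
Proof.
move=> Bs_B Bs_B' Bs_C Bs_C' BC B'B C'C cardD cardCC'.
apply/pred0P=> y /=; apply/negbTE/andP.
rewrite !inE => -[/andP[yB' yB] /andP[yC' yC]].
set D := B :&: B' in cardD *.
have yD : y \notin D by rewrite inE negb_and yB' orbT.
have [CC'_D | /subsetPn[c cCC' cD]] := boolP (C :&: C' \subset D).
  have DC : D \subset C.
    rewrite -(eqP (_ : C :&: C' == D)) ?subsetIl //.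
    by rewrite eqEcard CC'_D cardD cardCC'.
  have : y |: D \subset B :&: C by rewrite subUset sub1set !inE yB yC subsetI subsetIl.
  move/subset_leq_card; rewrite cardsU1 yD cardD.
  by move/leq_trans/(_ (meet_le2 Bs_B Bs_C BC)).
move: cCC'; rewrite inE => /andP[cC cC'].
set T := y |: (c |: D).
have cardT : #|T| = 4.
  have yc : y != c by apply: contraNneq yC' => ->.
  by rewrite !cardsU1 cD cardD in_setU1 negb_or yc yD.
have DBC' : D \subset B :|: C' by rewrite (subset_trans (subsetIl _ _)) ?subsetUl.
have DB'C : D \subset B' :|: C by rewrite (subset_trans (subsetIr _ _)) ?subsetUl.
have DBC : D \subset B :|: C by rewrite (subset_trans (subsetIl _ _)) ?subsetUl.
have sT1 : T \subset B :|: C' by rewrite !subUset !sub1set !inE yB cC' orbT.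
have sT2 : T \subset B' :|: C by rewrite !subUset !sub1set !inE yC cC !orbT.
have sT3 : T \subset B :|: C by rewrite !subUset !sub1set !inE yB cC orbT.
have [W inW] := IPPS2_common_block ipps cardT Bs_B Bs_C sT3.
case: (inW _ _ Bs_B Bs_C sT3) => WE; subst W.
  by case: (inW _ _ Bs_B' Bs_C sT2) => E; [rewrite E eqxx in B'B | rewrite E eqxx in BC].
by case: (inW _ _ Bs_B Bs_C' sT1) => E; [rewrite E eqxx in BC | rewrite E eqxx in C'C].
Qed.

Definition twinned :=
  [set B in Bs | [exists B', (B' \in Bs :\ B) && (#|B :&: B'| == 2)]].
Definition twin B := [pick B' in Bs :\ B | #|B :&: B'| == 2].
Definition private_part B := B :\: odflt B (twin B).

Lemma private_partE B : B \in twinned ->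
  exists B', [/\ B' \in Bs, B' != B, #|B :&: B'| = 2 & private_part B = B :\: B'].
Proof.
move=> /setIdP[_ /existsP[B0 twinB0]]; rewrite /private_part /twin.
case: pickP => [B' | none]; last by rewrite none in twinB0.
by rewrite !inE => /andP[/andP[B'B Bs_B'] /eqP cardBB']; exists B'.
Qed.

Lemma card_private_part : {in twinned, forall B, #|private_part B| = 2}.
Proof.
move=> B /[dup] /setIdP[Bs_B _] /private_partE[B' [_ _ cardBB' ->]].
by rewrite cardsD cardBB' ipps.1.
Qed.

Lemma disjoint_private_part :
  {in twinned &, forall B C, C != B -> [disjoint private_part B & private_part C]}.
Proof.
move=> B C /[dup] /setIdP[Bs_B _] /private_partE[B' [Bs_B' B'B cardBB' ->]].
move=> /[dup] /setIdP[Bs_C _] /private_partE[C' [Bs_C' C'C cardCC' ->]] CB.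
by apply: disjoint_private_parts; rewrite // eq_sym.
Qed.

End PrivateParts.

Theorem lemma5 (X : finType) (v : nat) (Bs : {set {set X}}) :
  #|X| = v ->
  IPPS 2 4 Bs ->
  (forall B1 B2, B1 \in Bs -> B2 \in Bs -> B1 != B2 -> #|B1 :&: B2| <= 2) ->
  (forall B x, B \in Bs -> x \in B -> exists2 B', B' \in Bs :\ B & x \in B') ->
  #|[set B in Bs | [exists B', (B' \in Bs :\ B) && (#|B :&: B'| == 2)]]| <= v - 1.
Proof.
move=> <- ipps meet_le2 _.
have := card_disjoint_family (ltn0Sn 1) (card_private_part ipps)
          (disjoint_private_part ipps meet_le2).
rewrite /twinned; lia.
Qed.
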